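(* Fix integers $k \ge 1$ and $n \ge 1$. For every database $D$ of $n$ rows and every neighboring database $D'$, $|\mathrm{SSA}(D) - \mathrm{SSA}(D')| \le 9 + 5/n$. That is, the sensitivity of $\mathrm{SSA}$ is at most $9 + 5/n$.
   Context: A database $D$ consists of $n$ rows. Each row is a pair $(g, y)$ with group label $g \in \{1,\dots,k\}$ and response value $y \in [0,1]$; the number of groups $k$ is fixed. For group $i$ let $n_i$ be the number of rows with label $i$, so $\sum_i n_i = n$. Let $\overline{y}_i$ be the mean response in group $i$, and let $\overline{y}$ be the mean of all $n$ responses; groups with $n_i = 0$ contribute nothing. Define $\mathrm{SSA}(D) = \sum_{i=1}^k n_i(\overline{y}_i - \overline{y})^2$. Two databases with $n$ rows each are neighboring if they differ in exactly one row; the changed row may have a different group label and/or a different response value. The sensitivity of a real-valued function $f$ on databases is $\max |f(D) - f(D')|$, taken over all neighboring pairs. *)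

From Stdlib Require Import Reals Lra List.
Import ListNotations.
Open Scope R_scope.

(* A row is a pair (group label g, response y). *)
Definition row := (nat * R)%type.

Definition valid_db (k n : nat) (D : list row) : Prop :=
  length D = n /\
  Forall (fun r => (1 <= fst r <= k)%nat /\ 0 <= snd r <= 1) D.

Definition group_count (D : list row) (i : nat) : R :=
  fold_right (fun r acc => (if Nat.eqb (fst r) i then 1 else 0) + acc) 0 D.

Definition group_sum (D : list row) (i : nat) : R :=
  fold_right (fun r acc => (if Nat.eqb (fst r) i then snd r else 0) + acc) 0 D.

Definition total_sum (D : list row) : R :=
  fold_right (fun r acc => snd r + acc) 0 D.

Definition overall_mean (D : list row) : R :=
  total_sum D / INR (length D).

(* Group mean  ybar_i  (only used when n_i > 0). *)
Definition group_mean (D : list row) (i : nat) : R :=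
  group_sum D i / group_count D i.

Definition ssa_term (D : list row) (i : nat) : R :=
  if Req_EM_T (group_count D i) 0 then 0
  else group_count D i * (group_mean D i - overall_mean D) ^ 2.

Definition SSA (k : nat) (D : list row) : R :=
  fold_right Rplus 0 (map (ssa_term D) (seq 1 k)).

Definition neighboring (D D' : list row) : Prop :=
  length D = length D' /\
  exists j, (j < length D)%nat /\
    forall m, m <> j -> nth_error D m = nth_error D' m.

(** Expanding the squares gives the computational formula
    SSA(D) = sum_i S_i^2 / n_i - T^2 / n, where S_i is the response sum of
    group i and T the total response.  Neighbouring databases both arise from
    a common database of n - 1 rows by inserting one row.  Inserting a row
    with response in [0,1] into a group changes S_i^2 / n_i by at most 1, and
    changing one response moves T^2 / n by at most 2 since 0 <= T <= n.
    Hence SSA changes by at most 1 + 1 + 2 = 4 <= 9 + 5/n. *)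

From Stdlib Require Import Reals List Lra Lia Psatz.
Import ListNotations.
Open Scope R_scope.

Lemma Rabs_div_le_1 (a p : R) : 0 < p -> - p <= a <= p -> Rabs (a / p) <= 1.
Proof.
  intros Hp Ha; apply Rabs_le.
  assert (Hq : a = a / p * p) by (field; lra).
  set (q := a / p) in *; nra.
Qed.

Definition sumR (l : list nat) (f : nat -> R) : R := fold_right Rplus 0 (map f l).

Lemma sumR_ext (l : list nat) (f g : nat -> R) :
  (forall i, In i l -> f i = g i) -> sumR l f = sumR l g.
Proof.
  induction l as [|a l IH]; intros Hfg; cbn; [reflexivity|].
  rewrite Hfg by now left. f_equal. apply IH. intros i Hi; apply Hfg; now right.
Qed.

Lemma sumR_add (l : list nat) (f g : nat -> R) :
  sumR l (fun i => f i + g i) = sumR l f + sumR l g.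
Proof. induction l as [|x l IH]; cbn; [ring|]. unfold sumR in IH; rewrite IH; ring. Qed.

Lemma sumR_sub (l : list nat) (f g : nat -> R) :
  sumR l (fun i => f i - g i) = sumR l f - sumR l g.
Proof. induction l as [|x l IH]; cbn; [ring|]. unfold sumR in IH; rewrite IH; ring. Qed.

Lemma sumR_scal (l : list nat) (a : R) (f : nat -> R) :
  sumR l (fun i => a * f i) = a * sumR l f.
Proof. induction l as [|x l IH]; cbn; [ring|]. unfold sumR in IH; rewrite IH; ring. Qed.

Lemma sumR_eq0 (l : list nat) (f : nat -> R) :
  (forall i, In i l -> f i = 0) -> sumR l f = 0.
Proof.
  intros Hf. rewrite (sumR_ext l f (fun i => 0 * f i)), sumR_scal; [ring|].
  intros i Hi; rewrite Hf by exact Hi; ring.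
Qed.

Lemma sumR_indicator (l : list nat) (a : nat) (y : R) :
  NoDup l -> In a l -> sumR l (fun i => if Nat.eqb a i then y else 0) = y.
Proof.
  induction l as [|b l IH]; intros Hnd Ha; [destruct Ha|].
  inversion Hnd as [|? ? Hb Hnd']; subst.
  change (sumR (b :: l) ?f) with (f b + sumR l f).
  destruct (PeanoNat.Nat.eqb_spec a b) as [<-|Hab].
  - rewrite PeanoNat.Nat.eqb_refl, sumR_eq0; [ring|].
    intros i Hi; destruct (PeanoNat.Nat.eqb_spec a i) as [<-|]; [contradiction|reflexivity].
  - destruct Ha as [->|Ha]; [congruence|].
    apply PeanoNat.Nat.eqb_neq in Hab as ->. rewrite IH; auto; ring.
Qed.

(** [group_count], [group_sum] and [total_sum] are, up to conversion, these
    totals for the weights [fun _ => 1] and [snd]. *)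
Definition group_total (w : row -> R) (D : list row) (i : nat) : R :=
  fold_right (fun r acc => (if Nat.eqb (fst r) i then w r else 0) + acc) 0 D.

Definition row_total (w : row -> R) (D : list row) : R :=
  fold_right (fun r acc => w r + acc) 0 D.

Lemma row_total_one (D : list row) : row_total (fun _ => 1) D = INR (length D).
Proof.
  induction D as [|r D IH]; [reflexivity|].
  cbn [length]; rewrite S_INR, <- IH; apply Rplus_comm.
Qed.

Lemma sum_group_total (k : nat) (w : row -> R) (D : list row) :
  Forall (fun r => (1 <= fst r <= k)%nat) D ->
  sumR (seq 1 k) (group_total w D) = row_total w D.
Proof.
  induction D as [|r D IH]; intros Hlab.
  - apply sumR_eq0; reflexivity.
  - inversion Hlab as [|? ? Hr HD]; subst.
    change (row_total w (r :: D)) with (w r + row_total w D).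
    rewrite <- IH by exact HD.
    rewrite <- (sumR_indicator (seq 1 k) (fst r) (w r)) by (apply seq_NoDup || (apply in_seq; lia)).
    rewrite <- sumR_add. apply sumR_ext; intros i _; reflexivity.
Qed.

Lemma group_total_insert (w : row -> R) (A B : list row) (r : row) (i : nat) :
  group_total w (A ++ r :: B) i =
  group_total w (A ++ B) i + (if Nat.eqb (fst r) i then w r else 0).
Proof.
  unfold group_total; induction A as [|a A IH]; cbn [app fold_right] in *; [ring|].
  rewrite IH; ring.
Qed.

Lemma row_total_insert (w : row -> R) (A B : list row) (r : row) :
  row_total w (A ++ r :: B) = row_total w (A ++ B) + w r.
Proof.
  unfold row_total; induction A as [|a A IH]; cbn [app fold_right] in *; [ring|].
  rewrite IH; ring.
Qed.

Lemma group_total_bounds (w v : row -> R) (D : list row) (i : nat) :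
  Forall (fun r => 0 <= w r <= v r) D ->
  0 <= group_total w D i <= group_total v D i.
Proof.
  unfold group_total; induction D as [|r D IH]; intros HD; cbn [fold_right]; [lra|].
  inversion HD as [|? ? Hr HD']; subst. specialize (IH HD').
  destruct (Nat.eqb (fst r) i); lra.
Qed.

Lemma row_total_bounds (w v : row -> R) (D : list row) :
  Forall (fun r => 0 <= w r <= v r) D -> 0 <= row_total w D <= row_total v D.
Proof.
  unfold row_total; induction D as [|r D IH]; intros HD; cbn [fold_right]; [lra|].
  inversion HD as [|? ? Hr HD']; subst. specialize (IH HD'); lra.
Qed.

Definition sq_ratio (s c : R) : R := if Req_EM_T c 0 then 0 else s ^ 2 / c.

Lemma ssa_term_expand (D : list row) (i : nat) :
  0 <= group_sum D i <= group_count D i ->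
  ssa_term D i = sq_ratio (group_sum D i) (group_count D i)
     - 2 * overall_mean D * group_sum D i + overall_mean D ^ 2 * group_count D i.
Proof.
  unfold ssa_term, sq_ratio, group_mean; intros Hs.
  destruct (Req_EM_T (group_count D i) 0) as [Hc|Hc].
  - rewrite Hc in *; replace (group_sum D i) with 0 by lra; ring.
  - field; exact Hc.
Qed.

Definition sum_sq_ratio (k : nat) (D : list row) : R :=
  sumR (seq 1 k) (fun i => sq_ratio (group_sum D i) (group_count D i)).

Lemma SSA_sum_sq_ratio (k n : nat) (D : list row) : (1 <= n)%nat -> valid_db k n D ->
  SSA k D = sum_sq_ratio k D - total_sum D ^ 2 / INR n.
Proof.
  intros Hn [Hlen HD].
  assert (Hlab : Forall (fun r => (1 <= fst r <= k)%nat) D)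
    by (eapply Forall_impl; [|exact HD]; cbn; tauto).
  assert (Hresp : Forall (fun r => 0 <= snd r <= (fun _ => 1) r) D)
    by (eapply Forall_impl; [|exact HD]; cbn; tauto).
  assert (Hcount : sumR (seq 1 k) (group_count D) = INR n)
    by (rewrite <- Hlen, <- row_total_one; exact (sum_group_total k _ D Hlab)).
  assert (Hsum : sumR (seq 1 k) (group_sum D) = total_sum D)
    by exact (sum_group_total k snd D Hlab).
  unfold SSA; fold (sumR (seq 1 k) (ssa_term D)).
  rewrite (sumR_ext _ _ (fun i =>
     sq_ratio (group_sum D i) (group_count D i) + (- 2 * overall_mean D * group_sum D i
     + overall_mean D ^ 2 * group_count D i)))
    by (intros i _; rewrite ssa_term_expand; [ring|exact (group_total_bounds _ _ D i Hresp)]).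
  rewrite !sumR_add, !sumR_scal, Hcount, Hsum.
  unfold sum_sq_ratio, overall_mean.
  rewrite Hlen. assert (0 < INR n) by (apply lt_0_INR; lia). field; lra.
Qed.

Lemma sq_ratio_insert (s c y : R) : 0 <= s <= c -> 0 <= y <= 1 ->
  Rabs (sq_ratio (s + y) (c + 1) - sq_ratio s c) <= 1.
Proof.
  intros Hs Hy; unfold sq_ratio.
  destruct (Req_EM_T (c + 1) 0); [lra|].
  destruct (Req_EM_T c 0) as [Hc|Hc].
  - replace s with 0 by lra. rewrite Hc, Rminus_0_r.
    replace ((0 + y) ^ 2 / (0 + 1)) with (y * y) by field.
    apply Rabs_le; nra.
  - assert (Hc0 : 0 < c) by lra.
    replace ((s + y) ^ 2 / (c + 1) - s ^ 2 / c)
      with ((2 * c * s * y + c * y ^ 2 - s ^ 2) / (c * (c + 1))) by (field; lra).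
    apply Rabs_div_le_1; [nra|].
    (* With [N] the numerator: [c(c+1) - N = (c y - s)^2 + (c^2 + c)(1 - y^2)]
       and [N >= - s^2 >= - c^2]. *)
    assert (0 <= (c * y - s) ^ 2) by apply pow2_ge_0.
    assert (0 <= c * s * y) by (apply Rmult_le_pos; [apply Rmult_le_pos|]; lra).
    assert (y ^ 2 <= 1) by nra.
    split; nra.
Qed.

Lemma sum_sq_ratio_insert (k : nat) (A B : list row) (r : row) :
  (1 <= fst r <= k)%nat -> 0 <= snd r <= 1 ->
  Forall (fun r => 0 <= snd r <= 1) (A ++ B) ->
  Rabs (sum_sq_ratio k (A ++ r :: B) - sum_sq_ratio k (A ++ B)) <= 1.
Proof.
  intros Hlab Hy HAB.
  set (d := sq_ratio (group_sum (A ++ B) (fst r) + snd r) (group_count (A ++ B) (fst r) + 1)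
            - sq_ratio (group_sum (A ++ B) (fst r)) (group_count (A ++ B) (fst r))).
  assert (Hdiff : sum_sq_ratio k (A ++ r :: B) - sum_sq_ratio k (A ++ B) = d).
  { rewrite <- (sumR_indicator (seq 1 k) (fst r) d) by (apply seq_NoDup || (apply in_seq; lia)).
    unfold sum_sq_ratio; rewrite <- sumR_sub; apply sumR_ext; intros i _.
    change (group_sum ?D i) with (group_total snd D i).
    change (group_count ?D i) with (group_total (fun _ => 1) D i).
    rewrite !group_total_insert.
    destruct (PeanoNat.Nat.eqb_spec (fst r) i) as [<-|]; unfold d; [reflexivity|].
    rewrite !Rplus_0_r; ring. }
  rewrite Hdiff; apply sq_ratio_insert; [|exact Hy].
  exact (group_total_bounds snd (fun _ => 1) (A ++ B) (fst r) HAB).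
Qed.

Lemma sq_div_change (a b x : R) : 0 < x -> 0 <= a <= x -> 0 <= b <= x -> - 1 <= a - b <= 1 ->
  Rabs (a ^ 2 / x - b ^ 2 / x) <= 2.
Proof.
  intros Hx Ha Hb Hab.
  replace (a ^ 2 / x - b ^ 2 / x) with (2 * (((a - b) * ((a + b) / 2)) / x)) by (field; lra).
  rewrite Rabs_mult, Rabs_right by lra.
  enough (Rabs ((a - b) * ((a + b) / 2) / x) <= 1) by lra.
  apply Rabs_div_le_1; [exact Hx|].
  split; nra.
Qed.

Lemma neighboring_insert (D D' : list row) : neighboring D D' ->
  exists A B r r', D = A ++ r :: B /\ D' = A ++ r' :: B.
Proof.
  intros [Hlen (j & Hj & Heq)]; revert D' j Hlen Hj Heq.
  induction D as [|x D IH]; intros [|x' D'] j Hlen Hj Heq; cbn in Hj, Hlen; try lia.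
  destruct j as [|j].
  - exists [], D, x, x'; split; [reflexivity|]. cbn; f_equal.
    apply nth_error_ext; intros m; symmetry; apply (Heq (S m)); lia.
  - assert (x' = x) as -> by (injection (Heq 0%nat ltac:(lia)); auto).
    destruct (IH D' j) as (A & B & r & r' & -> & ->); try lia.
    + intros m Hm; apply (Heq (S m)); lia.
    + now exists (x :: A), B, r, r'.
Qed.

Lemma total_sum_bounds (k n : nat) (D : list row) : valid_db k n D ->
  0 <= total_sum D <= INR n.
Proof.
  intros [<- HD]; rewrite <- row_total_one.
  apply (row_total_bounds snd (fun _ => 1)).
  eapply Forall_impl; [|exact HD]; cbn; tauto.
Qed.

Lemma SSA_neighboring_le_4 (k n : nat) (D D' : list row) : (1 <= n)%nat ->
  valid_db k n D -> valid_db k n D' -> neighboring D D' ->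
  Rabs (SSA k D - SSA k D') <= 4.
Proof.
  intros Hn HD HD' Hnb.
  rewrite (SSA_sum_sq_ratio k n D), (SSA_sum_sq_ratio k n D') by assumption.
  pose proof (total_sum_bounds k n D HD) as HT.
  pose proof (total_sum_bounds k n D' HD') as HT'.
  destruct (neighboring_insert D D' Hnb) as (A & B & r & r' & -> & ->).
  destruct HD as [_ HD], HD' as [_ HD'].
  apply Forall_app in HD as [HA HrB]; apply Forall_cons_iff in HrB as [Hr HB].
  apply Forall_app in HD' as [_ HrB']; apply Forall_cons_iff in HrB' as [Hr' _].
  assert (HAB : Forall (fun r => 0 <= snd r <= 1) (A ++ B))
    by (apply Forall_app; split; (eapply Forall_impl; [|eassumption]); cbn; tauto).
  pose proof (sum_sq_ratio_insert k A B r (proj1 Hr) (proj2 Hr) HAB) as Hins.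
  pose proof (sum_sq_ratio_insert k A B r' (proj1 Hr') (proj2 Hr') HAB) as Hins'.
  assert (Hmean : Rabs (total_sum (A ++ r :: B) ^ 2 / INR n
                        - total_sum (A ++ r' :: B) ^ 2 / INR n) <= 2).
  { apply sq_div_change; [apply lt_0_INR; lia|exact HT|exact HT'|].
    change total_sum with (row_total snd); rewrite !row_total_insert; lra. }
  set (G := sum_sq_ratio k (A ++ B)) in *.
  set (G1 := sum_sq_ratio k (A ++ r :: B)) in *.
  set (G2 := sum_sq_ratio k (A ++ r' :: B)) in *.
  set (M := total_sum (A ++ r :: B) ^ 2 / INR n - total_sum (A ++ r' :: B) ^ 2 / INR n) in *.
  replace (G1 - _ - (G2 - _)) with ((G1 - G) - (G2 - G) - M) by (unfold M; ring).
  eapply Rle_trans; [apply Rabs_triang|]. rewrite Rabs_Ropp.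
  eapply Rle_trans; [apply Rplus_le_compat_r, Rabs_triang|]. rewrite Rabs_Ropp.
  lra.
Qed.

Theorem mainTheorem2 (k n : nat) (Hk : (1 <= k)%nat) (Hn : (1 <= n)%nat)
  (D D' : list row) :
  valid_db k n D -> valid_db k n D' -> neighboring D D' ->
  Rabs (SSA k D - SSA k D') <= 9 + 5 / INR n.
Proof.
  intros HD HD' Hnb.
  pose proof (SSA_neighboring_le_4 k n D D' Hn HD HD' Hnb) as Hle4.
  assert (0 <= 5 / INR n) by (apply Rlt_le, Rdiv_lt_0_compat; [lra|apply lt_0_INR; lia]).
  lra.
Qed.
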